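(* Let $G=(V,E)$ be a graph with colouring $f:V\to\{B,R\}$. There exists an optimal solution $E'$ to the MIE problem on $(G,f)$ such that no edge of $E'\setminus E$ is incident to a red node and no edge of $E\setminus E'$ is incident to a blue node (i.e., every added edge joins two blue nodes and every removed edge joins two red nodes).
   Context: Graphs are finite, simple and undirected. A colouring $f:V\to\{B,R\}$ partitions $V$ into the blue nodes $B=f^{-1}(B)$ and red nodes $R=f^{-1}(R)$. For an edge set $E'$ on $V$ and $v\in V$, let $b_{E'}(v)$ and $r_{E'}(v)$ be the numbers of blue and red neighbours of $v$ in $(V,E')$. A node $v$ is under (majority) illusion in $(V,E')$ if $r_{E'}(v)>b_{E'}(v)$. Standing assumption: $|B|>|R|$. An optimal solution to MIE is an edge set $E'$ on $V$ such that no node is under illusion in $(V,E')$ and $|E\setminus E'|+|E'\setminus E|$ is minimum among all such sets. *)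

From mathcomp Require Import all_boot.
Set Implicit Arguments. Unset Strict Implicit. Unset Printing Implicit Defensive.

(* An edge is a 2-element subset of T; an edge set
   (graph) on T is a set of such edges. *)

Definition is_blue {T : finType} (f : T -> bool) (v : T) : bool := f v.
Definition is_red {T : finType} (f : T -> bool) (v : T) : bool := ~~ f v.

Definition blue_nodes {T : finType} (f : T -> bool) : {set T} := [set v | is_blue f v].
Definition red_nodes {T : finType} (f : T -> bool) : {set T} := [set v | is_red f v].

Definition simple_edge_set {T : finType} (E : {set {set T}}) : Prop :=
  forall e, e \in E -> #|e| = 2.

Definition nbrs {T : finType} (E : {set {set T}}) (v : T) : {set T} :=
  [set u | (u != v) && ([set u; v] \in E)].

Definition blue_deg {T : finType} (f : T -> bool) (E : {set {set T}}) (v : T) : nat :=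
  #|[set u in nbrs E v | is_blue f u]|.
Definition red_deg {T : finType} (f : T -> bool) (E : {set {set T}}) (v : T) : nat :=
  #|[set u in nbrs E v | is_red f u]|.

Definition under_illusion {T : finType} (f : T -> bool) (E : {set {set T}}) (v : T) : Prop :=
  red_deg f E v > blue_deg f E v.

Definition edit_cost {T : finType} (E E' : {set {set T}}) : nat :=
  #|E :\: E'| + #|E' :\: E|.

Definition MIE_feasible {T : finType} (f : T -> bool) (E' : {set {set T}}) : Prop :=
  simple_edge_set E' /\ forall v, ~ under_illusion f E' v.

Definition MIE_optimal {T : finType} (f : T -> bool) (E E' : {set {set T}}) : Prop :=
  MIE_feasible f E' /\
  forall E'', MIE_feasible f E'' -> edit_cost E E' <= edit_cost E E''.

From mathcomp Require Import all_boot zify.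
Set Implicit Arguments. Unset Strict Implicit. Unset Printing Implicit Defensive.

(* Start from any optimal solution and repair its misplaced edits one at a time.
   An added edge [x, y] with x red is deleted again; if x is then under illusion,
   it still has a red neighbour u, and deleting [x, u] as well rebalances x.
   A deleted edge [x, y] of E with x blue is restored; if x is then under
   illusion, x has fewer than |R| < |B| blue neighbours, so some blue u <> x is
   not adjacent to x, and adding [x, u] rebalances x.  Each repair keeps the
   solution feasible, does not increase its cost, and strictly shrinks the set
   of misplaced edits (the second edge changed is never misplaced). *)

Lemma eq_set2_common (T : finType) (u x y : T) :
  u != x -> ([set u; x] == [set x; y]) = (u == y).
Proof.
move=> ux; apply/eqP/eqP => [eq_uxy | ->]; last exact: setUC.
have : u \in [set x; y] by rewrite -eq_uxy set21.
by rewrite !inE (negbTE ux) => /eqP.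
Qed.

Lemma forall_in_set2 (T : finType) (P : pred T) (x y : T) :
  [forall v in [set x; y], P v] = P x && P y.
Proof.
apply/forall_inP/andP => [P2 | [Px Py] v /set2P [] ->] //.
by split; apply: P2; rewrite !inE eqxx ?orbT.
Qed.

Section Neighbourhoods.
Variables (T : finType) (X : {set {set T}}).

Lemma mem_nbrs (x y : T) : (y \in nbrs X x) = (y != x) && ([set x; y] \in X).
Proof. by rewrite inE setUC. Qed.

Lemma nbrs_setD1_off (e : {set T}) v : v \notin e -> nbrs (X :\ e) v = nbrs X v.
Proof.
move=> ve; apply/setP => u; rewrite !inE.
case: (eqVneq [set u; v] e) => //= uve.
by move: ve; rewrite -uve set22.
Qed.

Lemma nbrs_setU1_off (e : {set T}) v : v \notin e -> nbrs (e |: X) v = nbrs X v.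
Proof.
move=> ve; apply/setP => u; rewrite !inE.
case: (eqVneq [set u; v] e) => //= uve.
by move: ve; rewrite -uve set22.
Qed.

Lemma nbrs_setD1_edge (x y : T) : nbrs (X :\ [set x; y]) x = nbrs X x :\ y.
Proof.
apply/setP => u; rewrite !inE.
case: (eqVneq u x) => [_ | ux] /=; first by rewrite andbF.
by rewrite (eq_set2_common _ ux).
Qed.

Lemma nbrs_setU1_edge (x y : T) : y != x -> nbrs ([set x; y] |: X) x = y |: nbrs X x.
Proof.
move=> yx; apply/setP => u; rewrite !inE.
case: (eqVneq u x) => [->|ux] /=; first by rewrite eq_sym (negbTE yx).
by rewrite eq_set2_common.
Qed.

Lemma card_sel_setD1 (N : {set T}) (P : pred T) w : w \in N ->
  #|[set u in N | P u]| = #|[set u in N :\ w | P u]| + P w.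
Proof.
move=> wN; rewrite (cardsD1 w) inE wN addnC; congr (_ + _).
by apply: eq_card => u; rewrite !inE andbA.
Qed.

Lemma card_nbrs_setD1 (P : pred T) x y : [set x; y] \in X -> y != x ->
  #|[set u in nbrs X x | P u]| = #|[set u in nbrs (X :\ [set x; y]) x | P u]| + P y.
Proof.
by move=> xyX yx; rewrite nbrs_setD1_edge; apply: card_sel_setD1; rewrite mem_nbrs yx.
Qed.

Lemma card_nbrs_setU1 (P : pred T) x y : [set x; y] \notin X -> y != x ->
  #|[set u in nbrs ([set x; y] |: X) x | P u]| = #|[set u in nbrs X x | P u]| + P y.
Proof.
move=> xyX yx; rewrite nbrs_setU1_edge // (card_sel_setD1 _ (setU11 _ _)).
by rewrite setU1K // mem_nbrs (negbTE xyX) andbF.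
Qed.

End Neighbourhoods.

Section Balance.
Variables (T : finType) (f : T -> bool).
Implicit Types (X : {set {set T}}) (x y v : T).

Definition balanced X v : bool := red_deg f X v <= blue_deg f X v.

Lemma MIE_feasibleE X :
  MIE_feasible f X <-> simple_edge_set X /\ forall v, balanced X v.
Proof.
rewrite /balanced; split=> -[sX bX]; split=> // v.
  by rewrite leqNgt; apply/negP; exact: bX.
by apply/negP; rewrite -leqNgt.
Qed.

Lemma simple_setD1 X (e : {set T}) : simple_edge_set X -> simple_edge_set (X :\ e).
Proof. by move=> sX e'; rewrite inE => /andP [_ /sX]. Qed.

Lemma simple_setU1 X x y :
  x != y -> simple_edge_set X -> simple_edge_set ([set x; y] |: X).
Proof. by move=> xy sX e /setU1P [-> | /sX]; rewrite ?cards2 ?xy. Qed.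

Lemma red_deg_le_card X v : red_deg f X v <= #|red_nodes f|.
Proof. by apply: subset_leq_card; apply/subsetP => u; rewrite !inE => /andP []. Qed.

Lemma red_deg_setD1 X x y : [set x; y] \in X -> y != x ->
  red_deg f X x = red_deg f (X :\ [set x; y]) x + is_red f y.
Proof. exact: card_nbrs_setD1. Qed.

Lemma blue_deg_setD1 X x y : [set x; y] \in X -> y != x ->
  blue_deg f X x = blue_deg f (X :\ [set x; y]) x + is_blue f y.
Proof. exact: card_nbrs_setD1. Qed.

Lemma red_deg_setU1 X x y : [set x; y] \notin X -> y != x ->
  red_deg f ([set x; y] |: X) x = red_deg f X x + is_red f y.
Proof. exact: card_nbrs_setU1. Qed.

Lemma blue_deg_setU1 X x y : [set x; y] \notin X -> y != x ->
  blue_deg f ([set x; y] |: X) x = blue_deg f X x + is_blue f y.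
Proof. exact: card_nbrs_setU1. Qed.

Lemma balanced_setD1_off X (e : {set T}) v :
  v \notin e -> balanced (X :\ e) v = balanced X v.
Proof. by move=> ve; rewrite /balanced /red_deg /blue_deg nbrs_setD1_off. Qed.

Lemma balanced_setU1_off X (e : {set T}) v :
  v \notin e -> balanced (e |: X) v = balanced X v.
Proof. by move=> ve; rewrite /balanced /red_deg /blue_deg nbrs_setU1_off. Qed.

Lemma balanced_setD1_red X x y : [set x; y] \in X -> y != x -> is_red f y ->
  balanced X x -> balanced (X :\ [set x; y]) x.
Proof.
move=> xyX yx ry; rewrite /balanced (red_deg_setD1 xyX yx) (blue_deg_setD1 xyX yx).
by move: ry; rewrite /is_red /is_blue => /negbTE ->; lia.
Qed.

Lemma balanced_setU1_blue X x y : [set x; y] \notin X -> y != x -> is_blue f y ->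
  balanced X x -> balanced ([set x; y] |: X) x.
Proof.
move=> xyX yx yb; rewrite /balanced (red_deg_setU1 xyX yx) (blue_deg_setU1 xyX yx).
by move: yb; rewrite /is_red /is_blue => ->; lia.
Qed.

Lemma balanced_setD1_edge X x y v : [set x; y] \in X -> x != y -> balanced X v ->
  (v = x -> is_red f y) -> (v = y -> is_red f x) -> balanced (X :\ [set x; y]) v.
Proof.
move=> xyX xy bv ry rx.
have [vx | vx] := eqVneq v x.
  by rewrite vx in bv *; apply: balanced_setD1_red; rewrite // ?(ry vx) // eq_sym.
have [vy | vy] := eqVneq v y.
  rewrite vy (setUC [set x]) in bv *.
  by apply: balanced_setD1_red; rewrite // ?(rx vy) // setUC.
by rewrite balanced_setD1_off // !inE negb_or vx vy.
Qed.

Lemma balanced_setU1_edge X x y v : [set x; y] \notin X -> x != y -> balanced X v ->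
  (v = x -> is_blue f y) -> (v = y -> is_blue f x) -> balanced ([set x; y] |: X) v.
Proof.
move=> xyX xy bv yb xb.
have [vx | vx] := eqVneq v x.
  by rewrite vx in bv *; apply: balanced_setU1_blue; rewrite // ?(yb vx) // eq_sym.
have [vy | vy] := eqVneq v y.
  rewrite vy (setUC [set x]) in bv *.
  by apply: balanced_setU1_blue; rewrite // ?(xb vy) // setUC.
by rewrite balanced_setU1_off // !inE negb_or vx vy.
Qed.

Lemma balanced_setD1_pair X x y u :
  [set x; y] \in X -> [set x; u] \in X :\ [set x; y] -> y != x -> u != x ->
  is_red f u -> balanced X x -> balanced (X :\ [set x; y] :\ [set x; u]) x.
Proof.
move=> xyX xuY yx ux; rewrite /balanced (red_deg_setD1 xyX yx) (blue_deg_setD1 xyX yx).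
rewrite (red_deg_setD1 xuY ux) (blue_deg_setD1 xuY ux) /is_red /is_blue => /negbTE ->.
by case: (f y); lia.
Qed.

Lemma balanced_setU1_pair X x y u :
  [set x; y] \notin X -> [set x; u] \notin [set x; y] |: X -> y != x -> u != x ->
  is_blue f u -> balanced X x -> balanced ([set x; u] |: ([set x; y] |: X)) x.
Proof.
move=> xyX xuY yx ux; rewrite /balanced (red_deg_setU1 xuY ux) (blue_deg_setU1 xuY ux).
rewrite (red_deg_setU1 xyX yx) (blue_deg_setU1 xyX yx) /is_red /is_blue => ->.
by case: (f y); lia.
Qed.

End Balance.

Lemma edit_cost_setD1 (T : finType) (E X : {set {set T}}) e : e \in X ->
  edit_cost E (X :\ e) + (e \notin E) = edit_cost E X + (e \in E).
Proof.
move=> eX; rewrite /edit_cost (cardsD1 e (X :\: E)) (cardsD1 e (E :\: (X :\ e))).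
have -> : (E :\: (X :\ e)) :\ e = E :\: X.
  by apply/setP => a; rewrite !inE; case: eqVneq => [->|] //=; rewrite eX.
have -> : (X :\: E) :\ e = (X :\ e) :\: E by apply/setP => a; rewrite !inE andbCA.
rewrite !inE eqxx eX /= andbT; lia.
Qed.

Lemma edit_cost_setU1 (T : finType) (E X : {set {set T}}) e : e \notin X ->
  edit_cost E (e |: X) + (e \in E) = edit_cost E X + (e \notin E).
Proof.
move=> eX; have := edit_cost_setD1 E (setU11 e X).
by rewrite setU1K //; lia.
Qed.

Lemma edit_cost_setD1_le (T : finType) (E X : {set {set T}}) e : e \in X ->
  edit_cost E (X :\ e) <= (edit_cost E X).+1.
Proof. by move=> eX; have := edit_cost_setD1 E eX; case: (e \in E) => /=; lia. Qed.

Lemma edit_cost_setU1_le (T : finType) (E X : {set {set T}}) e : e \notin X ->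
  edit_cost E (e |: X) <= (edit_cost E X).+1.
Proof. by move=> eX; have := edit_cost_setU1 E eX; case: (e \in E) => /=; lia. Qed.

Section Misedits.
Variables (T : finType) (f : T -> bool) (E : {set {set T}}).
Implicit Types (X Z : {set {set T}}) (e : {set T}).

Definition misplaced X e : bool :=
  (e \in X :\: E) && ~~ [forall v in e, is_blue f v] ||
  (e \in E :\: X) && ~~ [forall v in e, is_red f v].

Definition misedits X : {set {set T}} := [set e | misplaced X e].

Lemma misedits_sub X Z :
  (forall e, (e \in Z) != (e \in X) -> ~~ misplaced Z e) ->
  misedits Z \subset misedits X.
Proof.
move=> Zgood; apply/subsetP => e; rewrite !inE.
have [eq_ZX | /Zgood /negbTE -> //] := eqVneq (e \in Z) (e \in X).
by rewrite /misplaced !inE eq_ZX.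
Qed.

Lemma misedits_setD1 X e :
  ~~ misplaced (X :\ e) e -> misedits (X :\ e) \subset misedits X.
Proof.
move=> eok; apply: misedits_sub => e'.
by case: (eqVneq e' e) => [-> // | ne]; rewrite !inE ?ne ?(negbTE ne) eqxx.
Qed.

Lemma misedits_setU1 X e :
  ~~ misplaced (e |: X) e -> misedits (e |: X) \subset misedits X.
Proof.
move=> eok; apply: misedits_sub => e'.
by case: (eqVneq e' e) => [-> // | ne]; rewrite !inE ?ne ?(negbTE ne) eqxx.
Qed.

Lemma misedits_proper X Z e : misedits Z \subset misedits X ->
  misplaced X e -> ~~ misplaced Z e -> misedits Z \proper misedits X.
Proof.
by move=> sZX eX eZ; rewrite properE sZX; apply/subsetPn; exists e; rewrite inE.
Qed.

End Misedits.

Section Repair.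
Variables (T : finType) (f : T -> bool) (E : {set {set T}}).
Implicit Types (X : {set {set T}}) (x y : T).

Lemma repair_added_edge X x y :
  simple_edge_set X -> (forall v, balanced f X v) ->
  x != y -> [set x; y] \in X -> [set x; y] \notin E -> is_red f x ->
  exists2 Z, MIE_feasible f Z &
    edit_cost E Z <= edit_cost E X /\ misedits f E Z \proper misedits f E X.
Proof.
move=> sX bX xy xyX xyE rx; have yx : y != x by rewrite eq_sym.
set Y := X :\ [set x; y].
have cY : edit_cost E Y < edit_cost E X.
  by have := edit_cost_setD1 E xyX; rewrite -/Y (negbTE xyE) /=; lia.
have mY : misedits f E Y \proper misedits f E X.
  have misX : misplaced f E X [set x; y].
    by rewrite /misplaced !inE xyX xyE forall_in_set2 /is_blue (negbTE rx).
  have okY : ~~ misplaced f E Y [set x; y].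
    by rewrite /misplaced !inE eqxx (negbTE xyE).
  exact: misedits_proper (misedits_setD1 okY) misX okY.
have bY v : v != x -> balanced f Y v.
  move=> vx; apply: (balanced_setD1_edge xyX xy (bX v)) => [vx' | _ //].
  by rewrite vx' eqxx in vx.
have [bYx | ubYx] := boolP (balanced f Y x).
  exists Y; last by split; first exact: ltnW.
  apply/MIE_feasibleE; split; first exact: simple_setD1.
  by move=> v; case: (eqVneq v x) => [-> | /bY].
have /card_gt0P [u] : 0 < red_deg f Y x by move: ubYx; rewrite /balanced; lia.
rewrite inE mem_nbrs => /andP [/andP [ux xuY] ru].
have xu : x != u by rewrite eq_sym.
exists (Y :\ [set x; u]).
  apply/MIE_feasibleE; split; first exact/simple_setD1/simple_setD1.
  move=> v; case: (eqVneq v x) => [-> | vx].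
    exact: balanced_setD1_pair xyX xuY yx ux ru (bX x).
  apply: (balanced_setD1_edge xuY xu (bY v vx)) => [vx' | _ //].
  by rewrite vx' eqxx in vx.
split; first exact: leq_trans (edit_cost_setD1_le E xuY) cY.
apply: sub_proper_trans mY; apply: misedits_setD1.
by rewrite /misplaced !inE eqxx !forall_in_set2 rx ru /= !andbF.
Qed.

Lemma repair_removed_edge X x y : #|red_nodes f| < #|blue_nodes f| ->
  simple_edge_set X -> (forall v, balanced f X v) ->
  x != y -> [set x; y] \in E -> [set x; y] \notin X -> is_blue f x ->
  exists2 Z, MIE_feasible f Z &
    edit_cost E Z <= edit_cost E X /\ misedits f E Z \proper misedits f E X.
Proof.
move=> RB sX bX xy xyE xyX bx; have yx : y != x by rewrite eq_sym.
set Y := [set x; y] |: X.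
have cY : edit_cost E Y < edit_cost E X.
  by have := edit_cost_setU1 E xyX; rewrite -/Y xyE /=; lia.
have mY : misedits f E Y \proper misedits f E X.
  have misX : misplaced f E X [set x; y].
    by rewrite /misplaced !inE (negbTE xyX) xyE !forall_in_set2 /is_red (bx : f x).
  have okY : ~~ misplaced f E Y [set x; y].
    by rewrite /misplaced !inE eqxx xyE.
  exact: misedits_proper (misedits_setU1 okY) misX okY.
have bY v : v != x -> balanced f Y v.
  move=> vx; apply: (balanced_setU1_edge xyX xy (bX v)) => [vx' | _ //].
  by rewrite vx' eqxx in vx.
have [bYx | ubYx] := boolP (balanced f Y x).
  exists Y; last by split; first exact: ltnW.
  apply/MIE_feasibleE; split; first exact: simple_setU1.
  by move=> v; case: (eqVneq v x) => [-> | /bY].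
have : ~~ (blue_nodes f \subset x |: [set u in nbrs Y x | is_blue f u]).
  apply/negP => /subset_leq_card; rewrite cardsU1.
  by have := red_deg_le_card f Y x; move: ubYx RB; rewrite /balanced /blue_deg; lia.
case/subsetPn => u; rewrite inE => bu.
rewrite in_setU1 negb_or in_set mem_nbrs => /andP [ux].
rewrite ux bu /= andbT => xuY; have xu : x != u by rewrite eq_sym.
exists ([set x; u] |: Y).
  apply/MIE_feasibleE; split; first exact/simple_setU1/simple_setU1.
  move=> v; case: (eqVneq v x) => [-> | vx].
    exact: balanced_setU1_pair xyX xuY yx ux bu (bX x).
  apply: (balanced_setU1_edge xuY xu (bY v vx)) => [vx' | _ //].
  by rewrite vx' eqxx in vx.
split; first exact: leq_trans (edit_cost_setU1_le E xuY) cY.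
apply: sub_proper_trans mY; apply: misedits_setU1.
by rewrite /misplaced !inE eqxx !forall_in_set2 bx bu /= !andbF.
Qed.

Lemma repair_misplaced X e :
  simple_edge_set E -> #|red_nodes f| < #|blue_nodes f| ->
  MIE_feasible f X -> misplaced f E X e ->
  exists2 Z, MIE_feasible f Z &
    edit_cost E Z <= edit_cost E X /\ misedits f E Z \proper misedits f E X.
Proof.
move=> sE RB /MIE_feasibleE [sX bX]; rewrite /misplaced !inE.
case/orP => [/andP [/andP [eE eX]] | /andP [/andP [eX eE]]].
  have /eqP/cards2P [x [y [xy e_xy]]] := sX e eX; subst e.
  rewrite forall_in_set2 negb_and => /orP [] rxy.
    exact: repair_added_edge sX bX xy eX eE rxy.
  rewrite setUC in eE eX.
  by apply: repair_added_edge sX bX _ eX eE rxy; rewrite eq_sym.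
have /eqP/cards2P [x [y [xy e_xy]]] := sE e eE; subst e.
rewrite forall_in_set2 negb_and => /orP [] /negbNE bxy.
  exact: repair_removed_edge RB sX bX xy eE eX bxy.
rewrite setUC in eE eX.
by apply: repair_removed_edge RB sX bX _ eE eX bxy; rewrite eq_sym.
Qed.

End Repair.

Lemma exists_MIE_optimal (T : finType) (f : T -> bool) (E : {set {set T}}) :
  exists X, MIE_optimal f E X.
Proof.
pose feasible (X : {set {set T}}) :=
  [forall e in X, #|e| == 2] && [forall v, balanced f X v].
have feasibleP X : MIE_feasible f X <-> feasible X.
  rewrite MIE_feasibleE; split=> [[sX bX] | /andP [/forall_inP sX /forallP bX]].
    by apply/andP; split; [apply/forall_inP => e /sX -> | apply/forallP].
  by split=> // e /sX /eqP.
have feasible0 : feasible set0.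
  apply/feasibleP/MIE_feasibleE; split=> [e | v]; first by rewrite inE.
  rewrite /balanced /red_deg; apply: subset_leq_card.
  by apply/subsetP => u; rewrite !inE andbF.
case: (arg_minnP (edit_cost E) feasible0) => X feasX minX.
by exists X; split=> [|Z /feasibleP]; [apply/feasibleP | exact: minX].
Qed.

Lemma exists_MIE_optimal_without_misedits (T : finType) (f : T -> bool)
    (E : {set {set T}}) :
  simple_edge_set E -> #|red_nodes f| < #|blue_nodes f| ->
  exists2 X, MIE_optimal f E X & misedits f E X = set0.
Proof.
move=> sE RB; have [X0 optX0] := exists_MIE_optimal f E.
have [n] := ubnP #|misedits f E X0|; elim: n X0 optX0 => // n IH X [feasX minX] ltXn.
have [mis0 | [e]] := set_0Vmem (misedits f E X); first by exists X.
rewrite inE => /(repair_misplaced sE RB feasX) [Z feasZ [cZ mZ]].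
apply: (IH Z); last exact: leq_trans (proper_card mZ) _.
by split=> // W /minX; apply: leq_trans.
Qed.

Theorem mainTheorem5 (T : finType) (E : {set {set T}}) (f : T -> bool) :
  simple_edge_set E ->
  #|blue_nodes f| > #|red_nodes f| ->
  exists E' : {set {set T}},
    MIE_optimal f E E' /\
    (forall e, e \in E' :\: E -> forall v, v \in e -> is_blue f v) /\
    (forall e, e \in E :\: E' -> forall v, v \in e -> is_red f v).
Proof.
move=> sE RB; have [X optX mis0] := exists_MIE_optimal_without_misedits sE RB.
exists X; split=> //.
have okX e : ~~ misplaced f E X e.
  by apply/negP => misXe; have := in_set0 e; rewrite -mis0 inE misXe.
split=> e eD v ve; move: (okX e); rewrite /misplaced eD /= negb_or.
  by case/andP => /negbNE/forall_inP/(_ v ve).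
by case/andP => _ /negbNE/forall_inP/(_ v ve).
Qed.
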